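(* Let $x$ be an envy-free complete connected division of a cake among $n$ players. Then there is no connected division $y$ (partial or complete) that strictly Pareto dominates $x$, i.e., there is no connected division $y$ with $u_i(y,i)>u_i(x,i)$ for all $i\in\{1,\dots,n\}$.
   Context: A cake is the interval $[0,1]$. There are $n$ players; each player $i$ has a valuation $v_i$, a nonatomic probability measure on $[0,1]$. A (connected) division $x$ is a sequence $(X_1,\dots,X_n)$ of pairwise disjoint open intervals of $[0,1]$ (possibly empty), $X_i$ being the piece of player $i$; it is complete if the union of the closures of the $X_i$ equals $[0,1]$, and partial otherwise. Write $u_i(x,j)=v_i(X_j)$. $x$ is envy-free if $u_i(x,i)\ge u_i(x,j)$ for all $i,j$. *)

From Stdlib Require Import Reals.
Open Scope R_scope.

(* A nonatomic probability measure on [0,1] is represented by its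
   cumulative distribution function F(t) = v([0,t]) restricted to [0,1]:
   F(0)=0, F(1)=1, F nondecreasing and continuous on [0,1] (continuity
   <=> nonatomic).  Such F determine the Borel measure uniquely and
   every such F arises from one. *)
Record valuation := mkValuation {
  cdf : R -> R;
  cdf0 : cdf 0 = 0;
  cdf1 : cdf 1 = 1;
  cdf_mono : forall a b, 0 <= a -> a <= b -> b <= 1 -> cdf a <= cdf b;
  cdf_cont : forall t eps, 0 <= t <= 1 -> 0 < eps ->
     exists delta, 0 < delta /\
       forall s, 0 <= s <= 1 -> Rabs (s - t) < delta -> Rabs (cdf s - cdf t) < eps
}.

(* A piece is an open interval (a,b) with 0 <= a <= b <= 1; it is empty iff a = b. *)
Definition piece := (R * R)%type.

Definition valid_piece (p : piece) : Prop := 0 <= fst p /\ fst p <= snd p /\ snd p <= 1.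

Definition empty_piece (p : piece) : Prop := fst p = snd p.

Definition disjoint_pieces (p q : piece) : Prop :=
  empty_piece p \/ empty_piece q \/ snd p <= fst q \/ snd q <= fst p.

Definition value (v : valuation) (p : piece) : R := cdf v (snd p) - cdf v (fst p).

Definition is_division (n : nat) (x : nat -> piece) : Prop :=
  (forall i, (i < n)%nat -> valid_piece (x i)) /\
  (forall i j, (i < n)%nat -> (j < n)%nat -> i <> j -> disjoint_pieces (x i) (x j)).

(* complete: union of closures of the pieces equals [0,1]
   (closure of a nonempty (a,b) is [a,b]; closure of the empty set is empty) *)
Definition complete (n : nat) (x : nat -> piece) : Prop :=
  forall t, 0 <= t <= 1 ->
    exists i, (i < n)%nat /\ ~ empty_piece (x i) /\ fst (x i) <= t <= snd (x i).

Definition u (v : nat -> valuation) (x : nat -> piece) (i j : nat) : R := value (v i) (x j).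

Definition envy_free (n : nat) (v : nat -> valuation) (x : nat -> piece) : Prop :=
  forall i j, (i < n)%nat -> (j < n)%nat -> u v x i i >= u v x i j.

From Stdlib Require Import Reals Lra Lia List ClassicalEpsilon.
Open Scope R_scope.

(* Every piece of a Pareto improvement [y] over an envy-free complete division
   [x] must strictly contain the left endpoint of some piece of [x]: otherwise
   it would lie inside a single piece of [x], which its owner values no more
   than her own.  Choosing such an endpoint for every player gives an
   injective map from players to pieces of [x] (the pieces of [y] are
   disjoint), hence a surjective one; but the piece of [x] starting at 0 has
   no left endpoint strictly inside any interval. *)

Lemma injective_on_bounded_surjective (n : nat) (f : nat -> nat) :
  (forall i, (i < n)%nat -> (f i < n)%nat) ->
  (forall i i', (i < n)%nat -> (i' < n)%nat -> f i = f i' -> i = i') ->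
  forall j, (j < n)%nat -> exists i, (i < n)%nat /\ f i = j.
Proof.
  intros f_lt f_inj j j_lt.
  assert (image_nodup : NoDup (map f (seq 0 n))).
  { apply NoDup_map_NoDup_ForallPairs; [|apply seq_NoDup].
    intros a b Ha Hb; apply in_seq in Ha, Hb; apply f_inj; lia. }
  assert (seq_in_image : incl (seq 0 n) (map f (seq 0 n))).
  { apply NoDup_length_incl; [exact image_nodup| |].
    - now rewrite length_map.
    - intros k Hk; apply in_map_iff in Hk as [i [<- Hi]].
      apply in_seq in Hi; apply in_seq; specialize (f_lt i); lia. }
  assert (j_in : In j (seq 0 n)) by (apply in_seq; lia).
  apply seq_in_image, in_map_iff in j_in as [i [fi Hi]].
  apply in_seq in Hi; exists i; split; [lia | exact fi].
Qed.

Lemma value_le_subpiece (v : valuation) (p q : piece) :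
  valid_piece q -> fst q <= fst p -> fst p <= snd p -> snd p <= snd q ->
  value v p <= value v q.
Proof.
  intros [q0 [qab q1]] qp pab pq; unfold value.
  pose proof (cdf_mono v (fst q) (fst p) q0 qp ltac:(lra)).
  pose proof (cdf_mono v (snd p) (snd q) ltac:(lra) pq q1).
  lra.
Qed.

Lemma value_pos_nonempty (v : valuation) (p : piece) :
  valid_piece p -> value v p > 0 -> fst p < snd p.
Proof.
  intros [_ [pab _]] pos; destruct (Rle_lt_or_eq_dec _ _ pab) as [lt|eq]; [exact lt|].
  unfold value in pos; rewrite eq in pos; lra.
Qed.

Lemma disjoint_pieces_no_common_inner_point (p q : piece) (t : R) :
  disjoint_pieces p q -> fst p < t < snd p -> fst q < t < snd q -> False.
Proof. unfold disjoint_pieces, empty_piece; lra. Qed.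

(* An interval of [0,1] that fits in no closed piece of a complete division
   contains a left endpoint: take the piece covering its midpoint, and if that
   piece sticks out on the left, the piece covering a point just beyond its
   right end. *)
Lemma complete_left_endpoint_inside (n : nat) (x : nat -> piece) (a b : R) :
  is_division n x -> complete n x -> 0 <= a < b -> b <= 1 ->
  (forall j, (j < n)%nat -> ~ (fst (x j) <= a /\ b <= snd (x j))) ->
  exists j, (j < n)%nat /\ a < fst (x j) < b.
Proof.
  intros [_ x_disj] x_compl ab b1 not_within.
  destruct (x_compl ((a + b) / 2) ltac:(lra)) as [j [j_lt [_ j_mid]]].
  destruct (Rlt_or_le a (fst (x j))) as [inside | left_of].
  { exists j; split; [exact j_lt | lra]. }
  assert (j_end : snd (x j) < b).
  { apply Rnot_le_lt; intro; apply (not_within j j_lt); lra. }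
  destruct (x_compl ((snd (x j) + b) / 2) ltac:(lra)) as [k [k_lt [_ k_mid]]].
  assert (jk : j <> k) by (intros <-; lra).
  exists k; split; [exact k_lt|].
  destruct (x_disj j k j_lt k_lt jk) as [? | [? | [? | ?]]];
    unfold empty_piece in *; lra.
Qed.

Lemma envy_free_improvement_not_within (n : nat) (v : nat -> valuation)
    (x : nat -> piece) (p : piece) (i j : nat) :
  is_division n x -> envy_free n v x -> (i < n)%nat -> (j < n)%nat ->
  fst p <= snd p -> value (v i) p > u v x i i ->
  ~ (fst (x j) <= fst p /\ snd p <= snd (x j)).
Proof.
  intros [x_valid _] x_ef i_lt j_lt pab gain [jp pj].
  pose proof (value_le_subpiece (v i) p (x j) (x_valid j j_lt) jp pab pj).
  pose proof (x_ef i j i_lt j_lt); unfold u in *; lra.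
Qed.

Lemma improvement_contains_left_endpoint (n : nat) (v : nat -> valuation)
    (x : nat -> piece) (p : piece) (i : nat) :
  is_division n x -> complete n x -> envy_free n v x -> (i < n)%nat ->
  valid_piece p -> value (v i) p > u v x i i ->
  exists j, (j < n)%nat /\ fst p < fst (x j) < snd p.
Proof.
  intros x_div x_compl x_ef i_lt p_valid gain.
  assert (own_nonneg : 0 <= u v x i i).
  { destruct x_div as [x_valid _]; destruct (x_valid i i_lt) as [? [? ?]].
    unfold u, value; pose proof (cdf_mono (v i) (fst (x i)) (snd (x i))); lra. }
  pose proof (value_pos_nonempty (v i) p p_valid ltac:(lra)) as p_nonempty.
  destruct p_valid as [p0 [_ p1]].
  apply (complete_left_endpoint_inside n x); [exact x_div | exact x_compl | lra | exact p1 |].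
  intros j j_lt; apply (envy_free_improvement_not_within n v x p i j); auto; lra.
Qed.

Theorem theorem4 (n : nat) (v : nat -> valuation) (x : nat -> piece) :
  is_division n x -> complete n x -> envy_free n v x ->
  ~ exists y : nat -> piece,
      is_division n y /\ (forall i, (i < n)%nat -> u v y i i > u v x i i).
Proof.
  intros x_div x_compl x_ef [y [[y_valid y_disj] y_gain]].
  assert (exists f : nat -> nat, forall i, (i < n)%nat ->
      (f i < n)%nat /\ fst (y i) < fst (x (f i)) < snd (y i)) as [f f_spec].
  { apply (choice (fun i j => (i < n)%nat -> (j < n)%nat /\ fst (y i) < fst (x j) < snd (y i))).
    intros i; destruct (Nat.lt_ge_cases i n) as [i_lt | i_ge].
    - destruct (improvement_contains_left_endpoint n v x (y i) i x_div x_compl x_ef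
          i_lt (y_valid i i_lt) (y_gain i i_lt)) as [j spec].
      now exists j.
    - exists 0%nat; lia. }
  assert (f_inj : forall i i', (i < n)%nat -> (i' < n)%nat -> f i = f i' -> i = i').
  { intros i i' i_lt i'_lt same; apply NNPP; intro ne.
    apply (disjoint_pieces_no_common_inner_point (y i) (y i') (fst (x (f i))));
      [exact (y_disj i i' i_lt i'_lt ne) | apply f_spec, i_lt |].
    rewrite same; apply f_spec, i'_lt. }
  destruct (x_compl 0 ltac:(lra)) as [j0 [j0_lt [_ [j0_start _]]]].
  destruct (injective_on_bounded_surjective n f (fun i lt => proj1 (f_spec i lt)) f_inj
              j0 j0_lt) as [i [i_lt fi]].
  destruct (f_spec i i_lt) as [_ [below _]]; destruct (y_valid i i_lt) as [y0 _].
  rewrite fi in below; lra.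
Qed.
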